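(* Let $k\geq 2$ be an integer. For every finite simple graph $G$ of order $n$ and size $m$ with minimum degree $\delta(G)\geq k$, $$\gamma_{\times k}(G)\geq \frac{(\delta(G)+k)\,n-2m}{\delta(G)+1}.$$
   Context: All graphs are finite and simple, with vertex set $V(G)$; order is the number of vertices and size the number of edges. For $v\in V(G)$ and $D\subseteq V(G)$, $\deg_D(v)$ is the number of neighbours of $v$ in $D$. $\delta(G)$ denotes the minimum degree. For a positive integer $k\leq \delta(G)+1$, a $k$-tuple dominating set of $G$ is a set $D\subseteq V(G)$ such that $\deg_D(v)\geq k$ for every $v\in V(G)\setminus D$ and $\deg_D(v)\geq k-1$ for every $v\in D$; the $k$-tuple domination number $\gamma_{\times k}(G)$ is the minimum cardinality of a $k$-tuple dominating set. *)

From mathcomp Require Import all_boot all_order all_algebra.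
Set Implicit Arguments. Unset Strict Implicit. Unset Printing Implicit Defensive.

Definition simple_graph (T : finType) (e : rel T) : Prop :=
  symmetric e /\ irreflexive e.

Definition nbhd (T : finType) (e : rel T) (v : T) : {set T} := [set u | e v u].
Definition deg (T : finType) (e : rel T) (v : T) : nat := #|nbhd e v|.
Definition deg_in (T : finType) (e : rel T) (D : {set T}) (v : T) : nat :=
  #|nbhd e v :&: D|.

(* minimum degree (the default #|T| is never attained on a nonempty simple
   graph, since degrees are < #|T|) *)
Definition min_deg (T : finType) (e : rel T) : nat :=
  \big[minn/#|T|]_(v : T) deg e v.

Definition g_order (T : finType) : nat := #|T|.
Definition edge_set (T : finType) (e : rel T) : {set {set T}} :=
  [set E : {set T} | [exists u, exists v, (e u v) && (E == [set u; v])]].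
Definition size_g (T : finType) (e : rel T) : nat := #|edge_set e|.

Definition ktuple_dom (T : finType) (e : rel T) (k : nat) (D : {set T}) : bool :=
  [forall v, if v \in D then k.-1 <= deg_in e D v else k <= deg_in e D v].

(* k-tuple domination number: minimum cardinality of a k-tuple dominating
   set (the whole vertex set is one whenever k <= delta + 1) *)
Definition ktuple_dom_num (T : finType) (e : rel T) (k : nat) : nat :=
  \big[minn/#|T|]_(D : {set T} | ktuple_dom e k D) #|D|.

From mathcomp Require Import all_boot all_order all_algebra.
From mathcomp Require Import zify.
Import Order.TTheory GRing.Theory Num.Theory.

(* Let D be a k-tuple dominating set of G (n vertices, m edges, minimum
   degree delta).  Split the degree of every vertex v into its neighbours
   inside D and outside D.  Summing over v:
   - the neighbours inside D count at least k-1 for v in D and at least k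
     for v outside D, i.e. at least (k-1) n + (n - |D|) in total;
   - the neighbours outside D, counted from the other end of each edge,
     sum to the total degree of the vertices outside D, which is at least
     delta (n - |D|).
   With the handshake lemma this gives 2m >= (k + delta) n - (delta+1) |D|.
   The theorem follows by applying this to a minimum k-tuple dominating set,
   which exists because the whole vertex set is k-tuple dominating. *)

Lemma card_indicator {U : finType} (A : {set U}) : #|A| = \sum_u (u \in A : nat).
Proof. by rewrite -sum1_card big_mkcond /=; apply: eq_bigr => u _; case: (u \in A). Qed.

Section DegreeCounting.
Context {T : finType} {e : rel T}.
Hypothesis e_sym : symmetric e.
Hypothesis e_irr : irreflexive e.

Lemma deg_splitD (D : {set T}) (v : T) :
  deg e v = deg_in e D v + deg_in e (~: D) v.
Proof. by rewrite /deg_in -setDE cardsID. Qed.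

(* Double counting the edges between V and the complement of D. *)
Lemma sum_deg_inC (D : {set T}) :
  \sum_v deg_in e (~: D) v = \sum_(u | u \notin D) deg e u.
Proof.
rewrite /deg_in /deg; under eq_bigr do rewrite card_indicator.
rewrite exchange_big /= [RHS]big_mkcond /=; apply: eq_bigr => u _.
rewrite card_indicator; case: ifP => uD.
  by apply: eq_bigr => v _; rewrite !inE uD andbT e_sym.
by rewrite big1 // => v _; rewrite !inE uD andbF.
Qed.

(* The edges incident to v are in bijection with the neighbours of v. *)
Lemma card_edges_at (v : T) : #|[set E in edge_set e | v \in E]| = deg e v.
Proof.
have -> : [set E in edge_set e | v \in E] = (fun u => [set v; u]) @: nbhd e v.
  apply/setP => E; rewrite !inE; apply/andP/imsetP.
  - case=> /existsP[a /existsP[b /andP[eab /eqP ->]]].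
    rewrite !inE; case/orP => /eqP vE; first by exists b; rewrite ?inE vE.
    by exists a; rewrite ?inE vE 1?e_sym // setUC.
  - case=> u; rewrite inE => evu ->; split; last by rewrite !inE eqxx.
    by apply/existsP; exists v; apply/existsP; exists u; rewrite evu eqxx.
rewrite card_in_imset // => u w; rewrite !inE => evu evw /setP /(_ u).
rewrite !inE eqxx orbT => /esym/orP[/eqP uv|/eqP //].
by move: evu; rewrite uv e_irr.
Qed.

(* Handshake lemma: every edge has exactly two endpoints. *)
Lemma handshake : 2 * size_g e = \sum_v deg e v.
Proof.
rewrite /size_g; under [RHS]eq_bigr do rewrite -card_edges_at card_indicator.
rewrite exchange_big /= -sum1_card big_distrr /= big_mkcond /=.
apply: eq_bigr => E _; case: ifP => EE; last first.
  by rewrite big1 // => v _; rewrite inE EE.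
move: (EE); rewrite inE => /existsP[a /existsP[b /andP[eab /eqP Eab]]].
under eq_bigr do rewrite inE EE /=.
rewrite muln1 -card_indicator Eab cards2.
by case: eqP => // ab; move: eab; rewrite ab e_irr.
Qed.

End DegreeCounting.

Lemma min_deg_le {T : finType} (e : rel T) (v : T) : min_deg e <= deg e v.
Proof.
rewrite /min_deg; have : v \in index_enum T by rewrite mem_index_enum.
elim: (index_enum T) => [//|x r IH]; rewrite inE big_cons.
by case/orP => [/eqP->|/IH h]; rewrite ?geq_minl // geq_min h orbT.
Qed.

Lemma ktuple_dom_setT {T : finType} {e : rel T} {k : nat} :
  k <= (min_deg e).+1 -> ktuple_dom e k [set: T].
Proof.
move=> k_le; apply/forallP => v; rewrite inE /deg_in setIT.
have := min_deg_le e v; rewrite /deg; lia.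
Qed.

Lemma ktuple_dom_num_attained {T : finType} {e : rel T} {k : nat} :
  ktuple_dom e k [set: T] ->
  exists2 D : {set T}, ktuple_dom e k D & #|D| = ktuple_dom_num e k.
Proof.
move=> domT; rewrite /ktuple_dom_num.
apply: (big_ind (fun y => exists2 D : {set T}, ktuple_dom e k D & #|D| = y)).
- by exists [set: T]; rewrite ?cardsT.
- by move=> x y [D domD <-] [D' domD' <-]; rewrite /minn; case: ifP => _;
    [exists D | exists D'].
- by move=> D domD; exists D.
Qed.

Lemma ktuple_dom_card_bound {T : finType} {e : rel T} {k : nat} {D : {set T}} :
  simple_graph e -> 0 < k -> ktuple_dom e k D ->
  (k + min_deg e) * #|T| <= 2 * size_g e + (min_deg e).+1 * #|D|.
Proof.
move=> [e_sym e_irr] k_gt0 /forallP domD.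
rewrite (handshake e_sym e_irr); under eq_bigr do rewrite (deg_splitD D).
rewrite big_split /= (sum_deg_inC e_sym).
have inside : #|T| * k.-1 + #|~: D| <= \sum_v deg_in e D v.
  have -> : #|T| * k.-1 = \sum_(v : T) k.-1 by rewrite sum_nat_const.
  rewrite (card_indicator (~: D)) -big_split /=.
  apply: leq_sum => v _; have := domD v; rewrite inE.
  by case: (v \in D) => /=; rewrite ?addn0 ?addn1 // prednK.
have outside : #|~: D| * min_deg e <= \sum_(u | u \notin D) deg e u.
  rewrite -sum_nat_const (eq_bigl (fun u => u \notin D)) => [|u]; last by rewrite inE.
  by apply: leq_sum => u _; apply: min_deg_le.
have cardD := cardsC D.
case: k k_gt0 domD inside => // j _ _ /= inside.
rewrite -cardD in inside *; nia.
Qed.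

Local Open Scope ring_scope.

Theorem mainTheorem4 (k : nat) (T : finType) (e : rel T) :
  (2 <= k)%N -> simple_graph e -> (k <= min_deg e)%N ->
  (((min_deg e + k)%:R * (g_order T)%:R - 2 * (size_g e)%:R) / (min_deg e).+1%:R : rat)
    <= (ktuple_dom_num e k)%:R.
Proof.
move=> k_ge2 simple_e k_le_delta.
have [D domD <-] := ktuple_dom_num_attained (ktuple_dom_setT (leqW k_le_delta)).
have bound := ktuple_dom_card_bound simple_e (ltnW k_ge2) domD.
rewrite ler_pdivrMr ?ltr0n // lerBlDr /g_order -(natrM _ #|D|) -!natrM -natrD ler_nat.
lia.
Qed.
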